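(* Let $X\in\mathbb{R}^{n\times p}$, $B^*\in\mathbb{R}^{p\times q}$, $\sigma^*>0$, $E\in\mathbb{R}^{n\times q}$ and $Y=XB^*+E$. Let $\lambda>0$, $0<\sigma_{\min}\le\sigma^*/\sqrt2$, and let $\eta>0$ satisfy $\lambda\|B^*\|_{2,1}\le\eta\sigma^*$. Suppose $E$ lies in the event $$\mathcal A_1=\Big\{\frac{\|X^\top E\|_{2,\infty}}{\sqrt{nq}\|E\|_F}\le\frac\lambda2\Big\}\cap\Big\{\frac{\sigma^*}{\sqrt2}<\frac{\|E\|_F}{\sqrt{nq}}<2\sigma^*\Big\}.$$ Let $(\hat B,\hat\sigma)$ be a minimizer over $B\in\mathbb{R}^{p\times q}$, $\sigma\ge\sigma_{\min}$ of $\frac{1}{2nq\sigma}\|Y-XB\|_F^2+\frac\sigma2+\lambda\|B\|_{2,1}$, and $\hat E=Y-X\hat B$. Then $$\tfrac{1}{\sqrt{nq}}\|\hat E\|_F\le(2+\eta)\sigma^*.$$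
   Context: $\|M\|_{2,1}=\sum_j\|M_{j:}\|_2$ and $\|M\|_{2,\infty}=\max_j\|M_{j:}\|_2$ over rows $M_{j:}$; $\|\cdot\|_F$ is the Frobenius norm. *)

From mathcomp Require Import all_boot all_order all_algebra.
Set Implicit Arguments. Unset Strict Implicit. Unset Printing Implicit Defensive.
Import Order.TTheory GRing.Theory Num.Theory.
Local Open Scope ring_scope.

Definition rownorm (R : rcfType) (m n : nat) (M : 'M[R]_(m, n)) (j : 'I_m) : R :=
  Num.sqrt (\sum_(k < n) M j k ^+ 2).

Definition frob (R : rcfType) (m n : nat) (M : 'M[R]_(m, n)) : R :=
  Num.sqrt (\sum_(i < m) \sum_(k < n) M i k ^+ 2).

Definition norm21 (R : rcfType) (m n : nat) (M : 'M[R]_(m, n)) : R :=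
  \sum_(j < m) rownorm M j.

(* ||M||_{2,oo} = max of row norms (0 for the empty matrix; row norms are >= 0) *)
Definition norm2inf (R : rcfType) (m n : nat) (M : 'M[R]_(m, n)) : R :=
  \big[Num.max/0]_(j < m) rownorm M j.

Definition sqrt_lasso_obj (R : rcfType) (n p q : nat)
  (X : 'M[R]_(n, p)) (Y : 'M[R]_(n, q)) (lam : R) (B : 'M[R]_(p, q)) (sigma : R) : R :=
  frob (Y - X *m B) ^+ 2 / (2 * n%:R * q%:R * sigma) + sigma / 2 + lam * norm21 B.

(** Compare the objective at the minimizer with its value at the oracle point
    [(B*, s)], where [s = ||E||_F / sqrt(nq)] is admissible because [s > sigma*/sqrt 2 >= sigma_min].
    At the oracle point the objective equals [s + lam ||B*||_{2,1} < (2 + eta) sigma*], while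
    by AM-GM the objective at any [(B, sigma)] dominates the normalized residual of [B]. *)
From mathcomp Require Import all_boot all_order all_algebra.
From mathcomp Require Import ring lra.
Import Order.TTheory GRing.Theory Num.Theory.
Local Open Scope ring_scope.

Section SqrtLasso.

Context {R : rcfType}.

Definition frob_rms {m k : nat} (M : 'M[R]_(m, k)) : R :=
  frob M / Num.sqrt (m%:R * k%:R).

Lemma norm21_ge0 {m k : nat} (M : 'M[R]_(m, k)) : 0 <= norm21 M.
Proof. by apply: sumr_ge0 => j _; apply: sqrtr_ge0. Qed.

Lemma amgm_half (a s : R) : 0 < s -> a <= a ^+ 2 / (2 * s) + s / 2.
Proof.
move=> s_gt0; rewrite -subr_ge0.
have -> : a ^+ 2 / (2 * s) + s / 2 - a = (a - s) ^+ 2 / (2 * s).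
  by field; rewrite lt0r_neq0.
by rewrite divr_ge0 ?sqr_ge0 // mulr_ge0 // ltW.
Qed.

Context {n p q : nat} (X : 'M[R]_(n, p)) (Y : 'M[R]_(n, q)) (lam : R).

Lemma sqrt_lasso_objE (B : 'M[R]_(p, q)) (sigma : R) :
  sqrt_lasso_obj X Y lam B sigma =
  frob_rms (Y - X *m B) ^+ 2 / (2 * sigma) + sigma / 2 + lam * norm21 B.
Proof.
have nq_sqrt : Num.sqrt (n%:R * q%:R) ^+ 2 = n%:R * q%:R :> R.
  by rewrite sqr_sqrtr // mulr_ge0.
rewrite /sqrt_lasso_obj /frob_rms expr_div_n nq_sqrt; congr (_ + _ + _).
by rewrite -[RHS]mulrA -invfM; congr (_ / _); ring.
Qed.

Lemma sqrt_lasso_obj_ge_rms (B : 'M[R]_(p, q)) (sigma : R) :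
  0 <= lam -> 0 < sigma -> frob_rms (Y - X *m B) <= sqrt_lasso_obj X Y lam B sigma.
Proof.
move=> lam_ge0 sigma_gt0; rewrite sqrt_lasso_objE.
have penalty_ge0 : 0 <= lam * norm21 B by rewrite mulr_ge0 ?norm21_ge0.
by apply: le_trans (amgm_half _ _ sigma_gt0) _; rewrite lerDl.
Qed.

Lemma sqrt_lasso_obj_at_rms (B : 'M[R]_(p, q)) :
  0 < frob_rms (Y - X *m B) ->
  sqrt_lasso_obj X Y lam B (frob_rms (Y - X *m B)) =
  frob_rms (Y - X *m B) + lam * norm21 B.
Proof.
move=> rms_gt0; rewrite sqrt_lasso_objE; congr (_ + _).
by field; rewrite lt0r_neq0.
Qed.

End SqrtLasso.

Theorem lemma5 (R : rcfType) (n p q : nat)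
  (X : 'M[R]_(n, p)) (Bstar : 'M[R]_(p, q)) (sigstar : R) (E Y : 'M[R]_(n, q))
  (lam sigmin eta : R) (Bhat : 'M[R]_(p, q)) (sighat : R) :
  0 < sigstar ->
  Y = X *m Bstar + E ->
  0 < lam ->
  0 < sigmin -> sigmin <= sigstar / Num.sqrt 2 ->
  0 < eta -> lam * norm21 Bstar <= eta * sigstar ->
  (* event A_1 *)
  norm2inf (X^T *m E) / (Num.sqrt (n%:R * q%:R) * frob E) <= lam / 2 ->
  sigstar / Num.sqrt 2 < frob E / Num.sqrt (n%:R * q%:R) ->
  frob E / Num.sqrt (n%:R * q%:R) < 2 * sigstar ->
  (* (Bhat, sighat) minimizes the objective over B and sigma >= sigmin *)
  sigmin <= sighat ->
  (forall (B : 'M[R]_(p, q)) (sigma : R), sigmin <= sigma ->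
     sqrt_lasso_obj X Y lam Bhat sighat <= sqrt_lasso_obj X Y lam B sigma) ->
  frob (Y - X *m Bhat) / Num.sqrt (n%:R * q%:R) <= (2 + eta) * sigstar.
Proof.
move=> _ ->{Y} lam_gt0 sigmin_gt0 sigmin_le _ penalty_le _ rmsE_gt rmsE_lt
  sigmin_le_sighat minimal.
have residual_star : X *m Bstar + E - X *m Bstar = E by rewrite addrAC subrr add0r.
have sigmin_le_rmsE : sigmin <= frob_rms E by apply/ltW/(le_lt_trans sigmin_le).
have rmsE_gt0 : 0 < frob_rms E by apply: lt_le_trans sigmin_le_rmsE.
have oracle := sqrt_lasso_obj_at_rms X (X *m Bstar + E) lam Bstar.
rewrite residual_star in oracle.
have := minimal Bstar _ sigmin_le_rmsE; rewrite oracle //.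
have := sqrt_lasso_obj_ge_rms X (X *m Bstar + E) lam Bhat sighat (ltW lam_gt0)
  (lt_le_trans sigmin_gt0 sigmin_le_sighat).
rewrite /frob_rms; lra.
Qed.
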